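(* Let $G$ be a semi-simple group (i.e. $G$ has no nontrivial normal abelian subgroup) with $|\mathcal{C}(G)|=n$ for some positive integer $n$. Then $G$ is finite and $|G|\le (n-1)!$.
   Context: For a group $G$, $\mathcal{C}(G)=\{C_G(x) : x\in G\}$ denotes the set of centralizers of elements of $G$, where $C_G(x)=\{g\in G: gx=xg\}$. The group $G$ is not assumed finite a priori. *)

From Stdlib Require Import Arith List.
Import ListNotations.

Definition is_group (G : Type) (mul : G -> G -> G) (e : G) (inv : G -> G) : Prop :=
  (forall x y z, mul x (mul y z) = mul (mul x y) z) /\
  (forall x, mul e x = x) /\ (forall x, mul x e = x) /\
  (forall x, mul (inv x) x = e) /\ (forall x, mul x (inv x) = e).

Definition centralizer {G : Type} (mul : G -> G -> G) (x : G) : G -> Prop :=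
  fun g => mul g x = mul x g.

Definition set_eq {G : Type} (S T : G -> Prop) : Prop := forall g, S g <-> T g.

(* |C(G)| = n : there are representatives c 0, ..., c (n-1) whose centralizers
   are pairwise distinct, and every centralizer equals one of them. *)
Definition num_centralizers {G : Type} (mul : G -> G -> G) (n : nat) : Prop :=
  exists c : nat -> G,
    (forall i j, i < n -> j < n ->
       set_eq (centralizer mul (c i)) (centralizer mul (c j)) -> i = j) /\
    (forall x, exists i, i < n /\ set_eq (centralizer mul x) (centralizer mul (c i))).

Definition is_subgroup {G : Type} (mul : G -> G -> G) (e : G) (inv : G -> G)
  (H : G -> Prop) : Prop :=
  H e /\ (forall x y, H x -> H y -> H (mul x y)) /\ (forall x, H x -> H (inv x)).

Definition is_normal {G : Type} (mul : G -> G -> G) (inv : G -> G)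
  (H : G -> Prop) : Prop :=
  forall g h, H h -> H (mul (mul (inv g) h) g).

Definition is_abelian_set {G : Type} (mul : G -> G -> G) (H : G -> Prop) : Prop :=
  forall x y, H x -> H y -> mul x y = mul y x.

Definition semisimple {G : Type} (mul : G -> G -> G) (e : G) (inv : G -> G) : Prop :=
  forall H : G -> Prop, is_subgroup mul e inv H -> is_normal mul inv H ->
    is_abelian_set mul H -> forall h, H h -> h = e.

Definition finite_of_order_le (G : Type) (m : nat) : Prop :=
  exists l : list G, NoDup l /\ (forall x, In x l) /\ length l <= m.

(* G acts by conjugation on its set C(G) of centralizers, since
   C(g^-1 x g) = g^-1 C(x) g, and this action fixes C(e) = G.  It is
   faithful: if k acts trivially then C(k^-1 y k) = C(y) for all y, so every
   y commutes with its conjugate by k; a short commutator computation shows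
   that k then commutes with all its conjugates, so the normal closure of k is
   a normal abelian subgroup, and semi-simplicity gives k = e.  Hence G embeds
   into the permutations of the n - 1 centralizers other than G, a set of
   size (n-1)!. *)
From Stdlib Require Import Arith List ClassicalEpsilon.
From mathcomp Require all_boot.

Module SemisimpleCentralizers.
Import all_boot.
Set Implicit Arguments.
Unset Strict Implicit.

Lemma In_mem (T : eqType) (x : T) (s : seq T) : In x s <-> x \in s.
Proof.
elim: s => //= y s IH; rewrite inE; split.
- by case=> [->|/IH ->]; rewrite ?eqxx ?orbT.
- by case/orP => [/eqP ->|/IH]; auto.
Qed.

Lemma length_size (A : Type) (s : list A) : length s = size s.
Proof. by elim: s => //= x s ->. Qed.

Lemma In_pmap (A B : Type) (p : A -> option B) (s : seq A) (y : B) :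
  In y (pmap p s) -> exists2 x, In x s & p x = Some y.
Proof.
elim: s => //= x s IH; case px: (p x) => [z|] /=.
- by case=> [<-|/IH [x' Hx' px']]; [exists x; auto | exists x'; auto].
- by case/IH => x' Hx' px'; exists x'; auto.
Qed.

Lemma pmap_In (A B : Type) (p : A -> option B) (s : seq A) (x : A) (y : B) :
  In x s -> p x = Some y -> In y (pmap p s).
Proof.
elim: s => //= x' s IH [-> px|Hx px]; first by rewrite px; left.
by case: (p x') => [z|] /=; [right|]; apply: IH.
Qed.

Lemma NoDup_pmap (T : eqType) (B : Type) (p : T -> option B) (s : seq T) :
  uniq s -> (forall x1 x2 y, p x1 = Some y -> p x2 = Some y -> x1 = x2) ->
  NoDup (pmap p s).
Proof.
move=> + p_inj; elim: s => /= [_|x s IH /andP [x_notin_s s_uniq]]; first by constructor.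
case px: (p x) => [y|] /=; last exact: IH.
constructor; last exact: IH.
move=> y_in; have [x' /In_mem x'_in_s px'] := In_pmap y_in.
by move: x_notin_s; rewrite (p_inj _ _ _ px px') x'_in_s.
Qed.

Lemma finite_of_injection (G : Type) (T : finType) (A : {pred T}) (f : G -> T) :
  injective f -> (forall g, f g \in A) -> finite_of_order_le G #|A|.
Proof.
move=> f_inj f_in_A.
pose preimage (t : T) : option G :=
  match excluded_middle_informative (exists g, f g = t) with
  | left H => Some (proj1_sig (constructive_indefinite_description _ H))
  | right _ => None
  end.
have preimageP t g : preimage t = Some g -> f g = t.
  rewrite /preimage; case: excluded_middle_informative => // H [<-].
  exact: (proj2_sig (constructive_indefinite_description _ H)).
have preimage_f g : preimage (f g) = Some g.
  rewrite /preimage; case: excluded_middle_informative => [H|[]]; last by exists g.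
  congr Some; apply: f_inj.
  exact: (proj2_sig (constructive_indefinite_description _ H)).
exists (pmap preimage (enum A)); split; [|split].
- apply: NoDup_pmap; first exact: enum_uniq.
  by move=> t1 t2 g /preimageP <- /preimageP <-.
- move=> g; apply: (pmap_In (x := f g)); last exact: preimage_f.
  by apply/In_mem; rewrite mem_enum.
- rewrite length_size; apply/leP.
  by rewrite size_pmap cardE count_size.
Qed.

Lemma fact_factorial (m : nat) : fact m = m`!.
Proof. by elim: m => // k IH; rewrite factS -IH. Qed.

Lemma card_injective_ffuns (m : nat) :
  #|[set f : {ffun 'I_m -> 'I_m} | injectiveb f]| = m`!.
Proof. by rewrite card_inj_ffuns card_ord ffactnn. Qed.

(* A permutation of ['I_m.+1] fixing [i0] restricts to a permutation of the
   remaining [m] points, which are identified with ['I_m] through [lift i0]. *)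
Section FixedPointRestriction.
Variables (m : nat) (i0 : 'I_m.+1).

Definition restrict_fixed (f : 'I_m.+1 -> 'I_m.+1) : {ffun 'I_m -> 'I_m} :=
  [ffun i => odflt i (unlift i0 (f (lift i0 i)))].

Section OneMap.
Variable f : 'I_m.+1 -> 'I_m.+1.
Hypotheses (f_inj : injective f) (f_i0 : f i0 = i0).

Lemma restrict_fixedE (i : 'I_m) : lift i0 (restrict_fixed f i) = f (lift i0 i).
Proof.
rewrite ffunE; have : i0 != f (lift i0 i).
  by rewrite -{1}f_i0 (inj_eq f_inj) neq_lift.
by case/unlift_some => j -> ->.
Qed.

Lemma restrict_fixed_injective : injectiveb (restrict_fixed f).
Proof.
apply/injectiveP => i j Eij; apply: (@lift_inj _ i0); apply: f_inj.
by rewrite -!restrict_fixedE Eij.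
Qed.
End OneMap.

Lemma restrict_fixed_faithful (f g : 'I_m.+1 -> 'I_m.+1) :
  injective f -> f i0 = i0 -> injective g -> g i0 = i0 ->
  restrict_fixed f = restrict_fixed g -> f =1 g.
Proof.
move=> f_inj f_i0 g_inj g_i0 Efg i; case: (unliftP i0 i) => [j ->|->].
- by rewrite -(restrict_fixedE f_inj f_i0) -(restrict_fixedE g_inj g_i0) Efg.
- by rewrite f_i0 g_i0.
Qed.
End FixedPointRestriction.

Section Group.
Variables (G : Type) (mul : G -> G -> G) (e : G) (inv : G -> G).
Hypothesis G_group : is_group G mul e inv.

Local Notation "x ⋅ y" := (mul x y) (at level 40, left associativity).
Local Notation "x ^-1" := (inv x).
Local Notation C := (centralizer mul).

Lemma mulA x y z : x ⋅ y ⋅ z = x ⋅ (y ⋅ z).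
Proof. by case: G_group => assoc _; rewrite assoc. Qed.
Lemma mul1g x : e ⋅ x = x.
Proof. by case: G_group => _ []. Qed.
Lemma mulg1 x : x ⋅ e = x.
Proof. by case: G_group => _ [_ []]. Qed.
Lemma mulVg x : x^-1 ⋅ x = e.
Proof. by case: G_group => _ [_ [_ []]]. Qed.
Lemma mulgV x : x ⋅ x^-1 = e.
Proof. by case: G_group => _ [_ [_ [_ ]]]. Qed.
Lemma mulKg x z : x^-1 ⋅ (x ⋅ z) = z.
Proof. by rewrite -mulA mulVg mul1g. Qed.
Lemma mulKVg x z : x ⋅ (x^-1 ⋅ z) = z.
Proof. by rewrite -mulA mulgV mul1g. Qed.

Lemma invg_unique x y : x ⋅ y = e -> x^-1 = y.
Proof. by move=> xy_e; rewrite -(mulKg x y) xy_e mulg1. Qed.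
Lemma invgK x : (x^-1)^-1 = x.
Proof. by apply: invg_unique; rewrite mulVg. Qed.
Lemma invg1 : e^-1 = e.
Proof. by apply: invg_unique; rewrite mul1g. Qed.
Lemma invgM x y : (x ⋅ y)^-1 = y^-1 ⋅ x^-1.
Proof. by apply: invg_unique; rewrite mulA mulKVg mulgV. Qed.

Ltac group_simpl := repeat progress rewrite
  ?mulA ?mul1g ?mulg1 ?mulVg ?mulgV ?mulKg ?mulKVg ?invgK ?invg1 ?invgM.

Definition conj (g x : G) : G := g^-1 ⋅ x ⋅ g.
Definition commute (x y : G) : Prop := x ⋅ y = y ⋅ x.

Lemma conjM g x y : conj g (x ⋅ y) = conj g x ⋅ conj g y.
Proof. by rewrite /conj; group_simpl. Qed.
Lemma conjV g x : conj g x^-1 = (conj g x)^-1.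
Proof. by rewrite /conj; group_simpl. Qed.
Lemma conjg1 g : conj g e = e.
Proof. by rewrite /conj; group_simpl. Qed.
Lemma conj1g x : conj e x = x.
Proof. by rewrite /conj; group_simpl. Qed.
Lemma conj_conj g h x : conj h (conj g x) = conj (g ⋅ h) x.
Proof. by rewrite /conj; group_simpl. Qed.
Lemma conjKV g x : conj g (conj g^-1 x) = x.
Proof. by rewrite /conj; group_simpl. Qed.
Lemma conjK g x : conj g^-1 (conj g x) = x.
Proof. by rewrite /conj; group_simpl. Qed.

Lemma commute_sym x y : commute x y -> commute y x.
Proof. by []. Qed.
Lemma commuteMr x y z : commute x y -> commute x z -> commute x (y ⋅ z).
Proof. by rewrite /commute => xy xz; rewrite -mulA xy mulA xz mulA. Qed.
Lemma commuteVr x y : commute x y -> commute x y^-1.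
Proof.
rewrite /commute => xy.
have -> : x ⋅ y^-1 = y^-1 ⋅ (y ⋅ x) ⋅ y^-1 by group_simpl.
by rewrite -xy; group_simpl.
Qed.

Lemma commute_conj g x y : commute (conj g x) (conj g y) <-> commute x y.
Proof.
rewrite /commute -!conjM; split => [E|-> //].
by rewrite -(conj1g (x ⋅ y)) -(mulgV g) -conj_conj E conj_conj mulgV conj1g.
Qed.

(* The commutator
   [k^-1 ⋅ conj y k] commutes with [y] and with [k ⋅ y], hence with [k]. *)
Lemma commute_own_conjugates k :
  (forall y, commute y (conj k y)) -> forall x, commute k (conj x k).
Proof.
move=> y_conj_k; pose commutator y := k^-1 ⋅ conj y k.
have comm_y y : commute y (commutator y).
  have -> : commutator y = (conj k y)^-1 ⋅ y by rewrite /commutator /conj; group_simpl.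
  by apply: commuteMr => //; apply: commuteVr.
have comm_ky y : commute (k ⋅ y) (commutator y).
  have -> : commutator y = (conj k (k ⋅ y))^-1 ⋅ (k ⋅ y).
    by rewrite /commutator /conj; group_simpl.
  by apply: commuteMr => //; apply: commuteVr.
have comm_k y : commute (commutator y) k.
  have -> : k = k ⋅ y ⋅ y^-1 by group_simpl.
  by apply: commuteMr; [apply: commute_sym | apply/commuteVr/commute_sym].
move=> x; have -> : conj x k = k ⋅ commutator x by rewrite /commutator; group_simpl.
by apply: commuteMr => //; apply: commute_sym.
Qed.

Lemma conjugates_commute k :
  (forall x, commute k (conj x k)) -> forall u v, commute (conj u k) (conj v k).
Proof.
move=> k_conj u v.
have -> : conj v k = conj u (conj (v ⋅ u^-1) k) by rewrite conj_conj; group_simpl.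
exact/commute_conj.
Qed.

Inductive normal_closure (k : G) : G -> Prop :=
| nc_conj g : normal_closure k (conj g k)
| nc_one : normal_closure k e
| nc_mul x y : normal_closure k x -> normal_closure k y -> normal_closure k (x ⋅ y)
| nc_inv x : normal_closure k x -> normal_closure k x^-1.

Lemma normal_closure_subgroup k : is_subgroup mul e inv (normal_closure k).
Proof. by split; [exact: nc_one | split; [exact: nc_mul | exact: nc_inv]]. Qed.

Lemma normal_closure_normal k : is_normal mul inv (normal_closure k).
Proof.
move=> g h; rewrite -[_ ⋅ _ ⋅ _]/(conj g h); elim=> [u||x y _ Hx _ Hy|x _ Hx].
- by rewrite conj_conj; apply: nc_conj.
- by rewrite conjg1; apply: nc_one.
- by rewrite conjM; apply: nc_mul.
- by rewrite conjV; apply: nc_inv.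
Qed.

Lemma normal_closure_centralized k x :
  (forall u, commute x (conj u k)) -> forall y, normal_closure k y -> commute x y.
Proof.
move=> x_conj y; elim=> [u||y1 y2 _ H1 _ H2|y1 _ H1] //.
- by rewrite /commute; group_simpl.
- exact: commuteMr.
- exact: commuteVr.
Qed.

Lemma normal_closure_abelian k :
  (forall u v, commute (conj u k) (conj v k)) -> is_abelian_set mul (normal_closure k).
Proof.
move=> conj_comm x y x_in y_in; apply: (normal_closure_centralized _ y_in) => u.
apply: commute_sym; exact: normal_closure_centralized.
Qed.

(* In a semi-simple group, an element [k] such that every [y] commutes with
   its conjugate by [k] is trivial: its normal closure is a normal abelian
   subgroup. *)
Lemma semisimple_conj_commuting_trivial k :
  semisimple mul e inv -> (forall y, commute y (conj k y)) -> k = e.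
Proof.
move=> G_semisimple /commute_own_conjugates/conjugates_commute conj_comm.
apply: (G_semisimple (normal_closure k)).
- exact: normal_closure_subgroup.
- exact: normal_closure_normal.
- exact: normal_closure_abelian.
- by have := nc_conj k e; rewrite conj1g.
Qed.

Lemma centralizer_conj g x z : C (conj g x) z <-> C x (conj g^-1 z).
Proof. by rewrite -{1}(conjKV g z); exact: commute_conj. Qed.

Lemma set_eq_sym (S T : G -> Prop) : set_eq S T -> set_eq T S.
Proof. by move=> ST z; split => /ST. Qed.
Lemma set_eq_trans (S T U : G -> Prop) : set_eq S T -> set_eq T U -> set_eq S U.
Proof. by move=> ST TU z; split => [/ST/TU|/TU/ST]. Qed.

Lemma set_eq_centralizer_conj g x y :
  set_eq (C x) (C y) -> set_eq (C (conj g x)) (C (conj g y)).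
Proof. by move=> Cxy z; rewrite !centralizer_conj; exact: Cxy. Qed.

(* A labelling of the centralizers of G by ['I_m.+1]: [idx x] names C(x),
   and [rep i] is an element whose centralizer carries the label [i]. *)
Section CentralizerLabels.
Variables (m : nat) (idx : G -> 'I_m.+1) (rep : 'I_m.+1 -> G).
Hypotheses (idx_eq : forall x y, idx x = idx y <-> set_eq (C x) (C y))
           (idx_rep : forall i, idx (rep i) = i).

Definition conj_action (g : G) (i : 'I_m.+1) : 'I_m.+1 := idx (conj g (rep i)).

Lemma idx_conj g x y : idx (conj g x) = idx (conj g y) <-> idx x = idx y.
Proof.
rewrite !idx_eq; split; last exact: set_eq_centralizer_conj.
by move/(set_eq_centralizer_conj g^-1); rewrite !conjK.
Qed.

Lemma conj_action_idx g x : conj_action g (idx x) = idx (conj g x).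
Proof. by apply/idx_conj; rewrite idx_rep. Qed.

Lemma conj_action_injective g : injective (conj_action g).
Proof. by move=> i j /idx_conj; rewrite !idx_rep. Qed.

Lemma conj_action_fixes_center g : conj_action g (idx e) = idx e.
Proof. by rewrite conj_action_idx conjg1. Qed.

(* The action is faithful: if [g] and [h] act alike, then every [y] has the
   same centralizer as its conjugate by [g ⋅ h^-1], so in particular commutes
   with it, and semi-simplicity forces [g ⋅ h^-1 = e]. *)
Lemma conj_action_faithful g h : semisimple mul e inv ->
  conj_action g =1 conj_action h -> g = h.
Proof.
move=> G_semisimple gh_alike; pose k := g ⋅ h^-1.
have k_fixes y : set_eq (C (conj k y)) (C y).
  apply/idx_eq/(idx_conj h); rewrite conj_conj -!conj_action_idx.
  by rewrite /k mulA mulVg mulg1; apply: gh_alike.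
have k_e : k = e.
  apply: (semisimple_conj_commuting_trivial G_semisimple) => y.
  by apply/(k_fixes y).
by rewrite -(mulg1 g) -(mulVg h) -mulA -/k k_e mul1g.
Qed.

(* Restricting the faithful action to the [m] centralizers other than C(e)
   embeds G into the injective self-maps of ['I_m]. *)
Lemma semisimple_order_le_labels : semisimple mul e inv -> finite_of_order_le G m`!.
Proof.
move=> G_semisimple; rewrite -card_injective_ffuns.
apply: (finite_of_injection (f := fun g => restrict_fixed (idx e) (conj_action g))).
- move=> g h /restrict_fixed_faithful same_action.
  apply: conj_action_faithful => //; apply: same_action;
    by [exact: conj_action_injective | exact: conj_action_fixes_center].
- move=> g; rewrite inE; apply: restrict_fixed_injective.
  + exact: conj_action_injective.
  + exact: conj_action_fixes_center.
Qed.
End CentralizerLabels.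

Lemma centralizer_labels m : num_centralizers mul m.+1 ->
  exists (idx : G -> 'I_m.+1) (rep : 'I_m.+1 -> G),
    (forall x y, idx x = idx y <-> set_eq (C x) (C y)) /\ (forall i, idx (rep i) = i).
Proof.
case=> c [c_distinct c_cover].
have label x : {i : 'I_m.+1 | set_eq (C x) (C (c i))}.
  case: (constructive_indefinite_description _ (c_cover x)) => i [/ltP lt_i Ci].
  by exists (Ordinal lt_i).
have c_inj (i j : 'I_m.+1) : set_eq (C (c i)) (C (c j)) -> i = j.
  by move=> Cij; apply: val_inj; apply: c_distinct => //; apply/ltP; exact: ltn_ord.
exists (fun x => sval (label x)), c; split.
- move=> x y /=; case: (label x) (label y) => i Ci [j Cj] /=; split => [ij|Cxy].
  + by subst j; exact: set_eq_trans Ci (set_eq_sym Cj).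
  + exact/c_inj/(set_eq_trans (set_eq_sym Ci))/(set_eq_trans Cxy).
- move=> i /=; case: (label (c i)) => j Cj /=.
  exact/c_inj/set_eq_sym.
Qed.

Lemma semisimple_order_le_fact m :
  semisimple mul e inv -> num_centralizers mul m.+1 -> finite_of_order_le G (fact m).
Proof.
move=> G_semisimple /centralizer_labels [idx [rep [idx_eq idx_rep]]].
rewrite fact_factorial; exact: semisimple_order_le_labels idx_eq idx_rep G_semisimple.
Qed.
End Group.
End SemisimpleCentralizers.

Theorem proposition2p5 (G : Type) (mul : G -> G -> G) (e : G) (inv : G -> G)
  (n : nat) :
  is_group G mul e inv ->
  semisimple mul e inv ->
  0 < n ->
  num_centralizers mul n ->
  finite_of_order_le G (fact (n - 1)).
Proof.
intros G_group G_semisimple n_pos G_centralizers.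
destruct n as [|m]; [inversion n_pos|].
simpl; rewrite Nat.sub_0_r.
exact (SemisimpleCentralizers.semisimple_order_le_fact G_group G_semisimple G_centralizers).
Qed.
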